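(* Let $p$ be an even positive integer and $\mathbb{H}$ any real Hilbert space (of dimension at least $2$). Let $T\in\mathbb{L}(\mathbb{H},\ell_p^2)$ be of rank one with $\|T\|=1$. Then $T$ is not an extreme contraction.
   Context: $\ell_p^2$ is $\mathbb{R}^2$ with norm $\|(a,b)\|=(|a|^p+|b|^p)^{1/p}$. An extreme contraction is a norm one operator that is an extreme point of the closed unit ball of $\mathbb{L}(\mathbb{H},\ell_p^2)$ (bounded linear operators, operator norm). *)

From HB Require Import structures.
From mathcomp Require Import all_boot all_order all_algebra.
From mathcomp Require Import all_classical all_reals all_analysis.
Set Implicit Arguments. Unset Strict Implicit. Unset Printing Implicit Defensive.
Import Order.TTheory GRing.Theory Num.Theory.
Import numFieldNormedType.Exports.
Local Open Scope classical_set_scope.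
Local Open Scope ring_scope.

(* A real Hilbert space: a complete real normed space whose norm comes from
   an inner product ip (bilinear, symmetric, with |x|^2 = ip x x). *)
Definition is_inner_product (R : realType) (V : completeNormedModType R)
  (ip : V -> V -> R) : Prop :=
  (forall a x y z, ip (a *: x + y) z = a * ip x z + ip y z) /\
  (forall x y, ip x y = ip y x) /\
  (forall x, `|x| ^+ 2 = ip x x).

Definition dim_ge2 (R : realType) (V : completeNormedModType R) : Prop :=
  exists x y : V, forall a b : R, a *: x + b *: y = 0 -> a = 0 /\ b = 0.

Definition lp2norm (R : realType) (p : nat) (v : R * R) : R :=
  (`|v.1| ^+ p + `|v.2| ^+ p) `^ (p%:R^-1).

Definition is_linear_op (R : realType) (V : completeNormedModType R)
  (T : V -> R * R) : Prop :=
  forall (a : R) (x y : V),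
    T (a *: x + y) = (a * (T x).1 + (T y).1, a * (T x).2 + (T y).2).

Definition is_bounded_op (R : realType) (p : nat) (V : completeNormedModType R)
  (T : V -> R * R) : Prop :=
  exists C : R, forall x : V, lp2norm p (T x) <= C * `|x|.

Definition BL (R : realType) (p : nat) (V : completeNormedModType R)
  (T : V -> R * R) : Prop := is_linear_op T /\ is_bounded_op p T.

Definition opnorm (R : realType) (p : nat) (V : completeNormedModType R)
  (T : V -> R * R) : R :=
  sup [set lp2norm p (T x) | x in [set x : V | `|x| <= 1]].

Definition unit_ball_op (R : realType) (p : nat) (V : completeNormedModType R)
  (T : V -> R * R) : Prop := BL p T /\ opnorm p T <= 1.

Definition op_comb (R : realType) (V : completeNormedModType R) (t : R)
  (S1 S2 : V -> R * R) : V -> R * R :=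
  fun x => (t * (S1 x).1 + (1 - t) * (S2 x).1, t * (S1 x).2 + (1 - t) * (S2 x).2).

Definition extreme_point_ball (R : realType) (p : nat) (V : completeNormedModType R)
  (T : V -> R * R) : Prop :=
  unit_ball_op p T /\
  forall (S1 S2 : V -> R * R) (t : R),
    unit_ball_op p S1 -> unit_ball_op p S2 -> 0 < t < 1 ->
    T = op_comb t S1 S2 -> S1 = T /\ S2 = T.

Definition extreme_contraction (R : realType) (p : nat) (V : completeNormedModType R)
  (T : V -> R * R) : Prop :=
  opnorm p T = 1 /\ extreme_point_ball p T.

Definition rank_one (R : realType) (V : completeNormedModType R)
  (T : V -> R * R) : Prop :=
  (exists x, T x != (0, 0)) /\
  exists v : R * R, forall x, exists c : R, T x = (c * v.1, c * v.2).

From HB Require Import structures.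
From mathcomp Require Import all_boot all_order all_algebra.
From mathcomp Require Import all_classical all_reals all_analysis.
From mathcomp Require Import ring lra.
Set Implicit Arguments. Unset Strict Implicit. Unset Printing Implicit Defensive.
Import Order.TTheory GRing.Theory Num.Theory.
Import numFieldNormedType.Exports.
Local Open Scope ring_scope.

(* Write T x = c(x) v and pick a unit vector e in ker T. As p is even,
   |z|_p^p = z_1^p + z_2^p is a polynomial, and w = (v_2^(p-1), -v_1^(p-1)) is
   orthogonal to its gradient at v, so in (c v + d w)_1^p + (c v + d w)_2^p the terms
   of first order in d cancel and the remainder is O(d^2 (|c| + |d|)^(p-2)).
   Decomposing x = a e + y with y orthogonal to e gives T x = T y, |T y|_p <= |y|
   and |x|^p - |y|^p >= a^2 |x|^(p-2), which absorbs that remainder for d = t a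
   and t small. Hence S_t x := T x + t <x, e> w is a contraction for |t| small,
   and T = (S_t + S_(-t)) / 2 with S_t e = t w <> 0 = T e. *)

Lemma normr_exprn_even (R : realDomainType) (n : nat) (x : R) :
  ~~ odd n -> `|x| ^+ n = x ^+ n.
Proof. by move=> ev; rewrite -normrX ger0_norm // exprn_even_ge0. Qed.

Lemma exprS_addr_ge (R : realDomainType) (k : nat) (a b : R) : 0 <= a -> 0 <= b ->
  a ^+ k.+1 + b * (a + b) ^+ k <= (a + b) ^+ k.+1.
Proof.
move=> a0 b0; rewrite [(a + b) ^+ k.+1]exprS mulrDl lerD2r exprS.
by apply: ler_wpM2l => //; apply: lerXn2r; rewrite ?nnegrE ?addr_ge0 ?lerDl.
Qed.

Lemma exprD_taylor2 (R : realFieldType) (n : nat) (y t : R) :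
  `|(y + t) ^+ n.+2 - y ^+ n.+2 - n.+2%:R * y ^+ n.+1 * t|
    <= n.+2%:R ^+ 2 * t ^+ 2 * (`|y| + `|t|) ^+ n.
Proof.
set S : R := `|y| + `|t|; have S0 : 0 <= S by rewrite addr_ge0.
elim: n => [|n IH].
  have -> : (y + t) ^+ 2 - y ^+ 2 - 2%:R * y ^+ 1 * t = t ^+ 2 by ring.
  by rewrite ger0_norm ?sqr_ge0 // expr0 mulr1; have := sqr_ge0 t; lra.
set E := (y + t) ^+ n.+2 - _ - _ in IH.
have -> : (y + t) ^+ n.+3 - y ^+ n.+3 - n.+3%:R * y ^+ n.+2 * t
    = (y + t) * E + n.+2%:R * (y ^+ n.+1 * t ^+ 2).
  by rewrite /E -!natr1 !exprS; ring.
have h1 : `|(y + t) * E| <= S * (n.+2%:R ^+ 2 * t ^+ 2 * S ^+ n).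
  by rewrite normrM; apply: ler_pM => //; exact: ler_normD.
have h2 : `|n.+2%:R * (y ^+ n.+1 * t ^+ 2)| <= n.+2%:R * (t ^+ 2 * S ^+ n.+1).
  rewrite normrM normr_nat ler_pM2l // normrM normrX [`|t ^+ 2|]ger0_norm ?sqr_ge0 //.
  rewrite mulrC.
  by apply: ler_wpM2l; rewrite ?sqr_ge0 // lerXn2r ?nnegrE // lerDl.
have coef : n.+2%:R ^+ 2 + n.+2%:R <= n.+3%:R ^+ 2 :> R.
  by rewrite -!natr1; have := ler0n R n; nra.
apply: le_trans (ler_normD _ _) _; apply: le_trans (lerD h1 h2) _.
have -> : S * (n.+2%:R ^+ 2 * t ^+ 2 * S ^+ n) = n.+2%:R ^+ 2 * (t ^+ 2 * S ^+ n.+1).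
  by rewrite [S ^+ n.+1]exprS mulrCA -!mulrA.
rewrite -mulrDl -mulrA; apply: ler_wpM2r => //.
by rewrite mulr_ge0 ?sqr_ge0 ?exprn_ge0.
Qed.

Definition lp_tangent {R : pzRingType} (n : nat) (v : R * R) : R * R :=
  (v.2 ^+ n.+1, - v.1 ^+ n.+1).

Lemma lp_tangent_eq0 (R : idomainType) (n : nat) (v : R * R) :
  (lp_tangent n v == (0, 0)) = (v == (0, 0)).
Proof.
case: v => v1 v2; rewrite /lp_tangent /= !xpair_eqE oppr_eq0 !expf_eq0 /=.
by rewrite andbC.
Qed.

Lemma sum_exprn_lp_tangent_le (R : realFieldType) (n : nat) (v : R * R) :
  exists2 M : R, 0 <= M & forall c d : R,
    (c * v.1 + d * (lp_tangent n v).1) ^+ n.+2 + (c * v.2 + d * (lp_tangent n v).2) ^+ n.+2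
      <= c ^+ n.+2 * (v.1 ^+ n.+2 + v.2 ^+ n.+2) + M * d ^+ 2 * (`|c| + `|d|) ^+ n.
Proof.
set w := lp_tangent n v.
set s : R := `|v.1| + `|v.2| + `|w.1| + `|w.2|.
have s0 : 0 <= s by rewrite !addr_ge0.
exists (n.+2%:R ^+ 2 * (w.1 ^+ 2 + w.2 ^+ 2) * s ^+ n).
  by rewrite mulr_ge0 ?exprn_ge0 // mulr_ge0 ?sqr_ge0 // addr_ge0 ?sqr_ge0.
move=> c d.
have taylor (a b : R) : `|a| <= s -> `|b| <= s ->
    (c * a + d * b) ^+ n.+2 <= c ^+ n.+2 * a ^+ n.+2
      + n.+2%:R * c ^+ n.+1 * d * (a ^+ n.+1 * b)
      + n.+2%:R ^+ 2 * b ^+ 2 * s ^+ n * d ^+ 2 * (`|c| + `|d|) ^+ n.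
  move=> ha hb.
  have T2 := le_trans (ler_norm _) (exprD_taylor2 n (c * a) (d * b)).
  have hs : (`|c * a| + `|d * b|) ^+ n <= ((`|c| + `|d|) * s) ^+ n.
    apply: lerXn2r; rewrite ?nnegrE ?addr_ge0 ?mulr_ge0 // !normrM mulrDl.
    by apply: lerD; apply: ler_wpM2l.
  have := ler_wpM2l (mulr_ge0 (sqr_ge0 n.+2%:R) (sqr_ge0 (d * b))) hs.
  by rewrite !exprMn in T2 *; lra.
have cross : n.+2%:R * c ^+ n.+1 * d * (v.1 ^+ n.+1 * w.1)
    + n.+2%:R * c ^+ n.+1 * d * (v.2 ^+ n.+1 * w.2) = 0.
  by rewrite /w /lp_tangent /=; ring.
have [le_s1 le_s2 le_s3 le_s4] : [/\ `|v.1| <= s, `|v.2| <= s, `|w.1| <= s & `|w.2| <= s].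
  have := normr_ge0 v.1; have := normr_ge0 v.2.
  have := normr_ge0 w.1; have := normr_ge0 w.2.
  by rewrite /s => *; split; lra.
have := taylor _ _ le_s1 le_s3; have := taylor _ _ le_s2 le_s4.
lra.
Qed.

Lemma exprn_double (R : pzSemiRingType) (m : nat) (x : R) : x ^+ m.*2 = (x ^+ 2) ^+ m.
Proof. by rewrite -mul2n exprM. Qed.

(* |S_t x|_p^p <= |x|^p in coordinates: T x = c v, N = v_1^p + v_2^p,
   x = al e + y with |y| = r and |x| = rho, and t = de. *)
Lemma lp_tangent_budget (R : realFieldType) (k : nat) (N M mu rho al r c de : R) :
  0 < mu -> mu ^+ k.+1.*2 <= N -> 0 <= M ->
  0 <= r -> 0 <= rho -> rho ^+ 2 = al ^+ 2 + r ^+ 2 ->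
  c ^+ k.+1.*2 * N <= r ^+ k.+1.*2 ->
  `|de| <= 1 -> M * de ^+ 2 * (mu^-1 + 1) ^+ k.*2 <= 1 ->
  c ^+ k.+1.*2 * N + M * (de * al) ^+ 2 * (`|c| + `|de * al|) ^+ k.*2 <= rho ^+ k.+1.*2.
Proof.
move=> mu0 muN M0 r0 rho0 rhoE cN de1 deM.
have mu_ge0 := ltW mu0.
have c_mu : mu * `|c| <= r.
  rewrite -(@ler_pXn2r _ k.+1.*2) ?nnegrE ?mulr_ge0 //.
  rewrite exprMn normr_exprn_even ?odd_double //.
  by apply: le_trans cN; rewrite mulrC ler_wpM2l ?exprn_even_ge0 ?odd_double.
have r_rho : r <= rho.
  by rewrite -(@ler_pXn2r _ 2) ?nnegrE // rhoE lerDr sqr_ge0.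
have al_rho : `|al| <= rho.
  by rewrite -(@ler_pXn2r _ 2) ?nnegrE // real_normK ?num_real // rhoE lerDl sqr_ge0.
have base : `|c| + `|de * al| <= (mu^-1 + 1) * rho.
  rewrite mulrDl mul1r; apply: lerD; first by rewrite ler_pdivlMl // (le_trans c_mu).
  by rewrite normrM -[rho]mul1r; apply: ler_pM.
have pert : M * (de * al) ^+ 2 * (`|c| + `|de * al|) ^+ k.*2 <= al ^+ 2 * rho ^+ k.*2.
  have le_base : (`|c| + `|de * al|) ^+ k.*2 <= ((mu^-1 + 1) * rho) ^+ k.*2.
    by apply: lerXn2r; rewrite // nnegrE ?addr_ge0 // mulr_ge0 // addr_ge0 ?invr_ge0.
  apply: le_trans (ler_wpM2l _ le_base) _; first by rewrite mulr_ge0 ?sqr_ge0.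
  have -> : M * (de * al) ^+ 2 * ((mu^-1 + 1) * rho) ^+ k.*2
      = (M * de ^+ 2 * (mu^-1 + 1) ^+ k.*2) * (al ^+ 2 * rho ^+ k.*2).
    by rewrite !exprMn; ring.
  rewrite -[X in _ <= X]mul1r; apply: ler_wpM2r deM.
  by rewrite mulr_ge0 ?sqr_ge0 ?exprn_ge0.
have split : r ^+ k.+1.*2 + al ^+ 2 * rho ^+ k.*2 <= rho ^+ k.+1.*2.
  by rewrite !exprn_double rhoE (addrC (al ^+ 2)) exprS_addr_ge ?sqr_ge0.
lra.
Qed.

Definition perturb {R : pzRingType} {V : Type} (T : V -> R * R) (de : R) (g : V -> R)
  (w : R * R) : V -> R * R :=
  fun x => ((T x).1 + de * g x * w.1, (T x).2 + de * g x * w.2).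

Section BoundedOperators.
Variables (R : realType) (V : completeNormedModType R).
Implicit Types (T S : V -> R * R) (x : V).

Lemma linear_op0 T : is_linear_op T -> T 0 = (0, 0).
Proof. by move=> Tlin; have := Tlin (-1) 0 0; rewrite scaler0 addr0 !mulN1r !addNr. Qed.

Lemma linear_opZ T a x : is_linear_op T -> T (a *: x) = (a * (T x).1, a * (T x).2).
Proof. by move=> Tlin; rewrite -[a *: x]addr0 Tlin linear_op0 // !addr0. Qed.

Lemma lp2normX (p : nat) (z : R * R) : (0 < p)%N ->
  lp2norm p z ^+ p = `|z.1| ^+ p + `|z.2| ^+ p.
Proof.
move=> p0; rewrite /lp2norm -powR_mulrn ?powR_ge0 // -powRrM mulVf ?powRr1 ?addr_ge0 //.
by rewrite pnatr_eq0 -lt0n.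
Qed.

Lemma lp2norm_le (p : nat) (z : R * R) (rho : R) : (0 < p)%N -> 0 <= rho ->
  (lp2norm p z <= rho) = (`|z.1| ^+ p + `|z.2| ^+ p <= rho ^+ p).
Proof. by move=> p0 rho0; rewrite -lp2normX // ler_pXn2r ?nnegrE ?powR_ge0. Qed.

Lemma opnorm_ub (p : nat) T x : BL p T -> `|x| <= 1 -> lp2norm p (T x) <= opnorm p T.
Proof.
move=> [_ [C hC]] x1; apply: ub_le_sup; last by exists x.
exists `|C| => _ [y y1 <-]; apply: le_trans (hC y) _.
apply: le_trans (ler_wpM2r (normr_ge0 y) (ler_norm C)) _.
by rewrite ler_piMr.
Qed.

Lemma opnorm_le1 (p : nat) T :
  (forall x, `|x| <= 1 -> lp2norm p (T x) <= 1) -> opnorm p T <= 1.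
Proof.
move=> hT; apply: ge_sup; first by exists (lp2norm p (T 0)), 0 => //=; rewrite normr0.
by move=> _ [x x1 <-]; exact: hT.
Qed.

Lemma unit_ball_opE (p : nat) S : (0 < p)%N ->
  unit_ball_op p S <->
  is_linear_op S /\ forall x, `|(S x).1| ^+ p + `|(S x).2| ^+ p <= `|x| ^+ p.
Proof.
move=> p0; split => [[S_BL S_le1]|[Slin Sle]].
  split=> [|x]; first exact: S_BL.1.
  have [->|x_neq0] := eqVneq x 0.
    by rewrite linear_op0 ?normr0 ?expr0n ?gtn_eqF ?addr0 //; case: S_BL.
  have x0 : 0 < `|x| by rewrite normr_gt0.
  have x1 : `|(`|x|^-1 *: x)| <= 1.
    by rewrite normrZ ger0_norm ?invr_ge0 ?normr_ge0 // mulVf ?gt_eqF.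
  have := le_trans (opnorm_ub S_BL x1) S_le1.
  rewrite lp2norm_le // expr1n linear_opZ /=; last by case: S_BL.
  rewrite !normrM !exprMn -mulrDr ger0_norm ?invr_ge0 ?normr_ge0 // exprVn ler_pdivrMl.
    by rewrite mulr1.
  by rewrite exprn_gt0.
split; first split=> //.
  by exists 1 => x; rewrite mul1r lp2norm_le.
apply: opnorm_le1 => x x1; rewrite lp2norm_le // expr1n.
by apply: le_trans (Sle x) _; exact: exprn_ile1.
Qed.

Lemma rank_one_kernel T (v : R * R) : dim_ge2 V -> is_linear_op T ->
  (forall x, exists c, T x = (c * v.1, c * v.2)) -> exists e, `|e| = 1 /\ T e = (0, 0).
Proof.
move=> [x [y xy_free]] Tlin hv.
have [e0 [e0_neq0 Te0]] : exists e0, e0 != 0 /\ T e0 = (0, 0).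
  have [a Tx] := hv x; have [b Ty] := hv y.
  have [a0|a_neq0] := eqVneq a 0.
    exists x; split; last by rewrite Tx a0 !mul0r.
    apply/eqP => x0; have := xy_free 1 0; rewrite x0 scaler0 scale0r addr0.
    by move=> /(_ erefl) [] /eqP; rewrite oner_eq0.
  exists (b *: x + (- a) *: y); split.
    apply/eqP => /xy_free [_ /eqP].
    by rewrite oppr_eq0 (negbTE a_neq0).
  by rewrite Tlin linear_opZ // Tx Ty /=; congr pair; ring.
exists (`|e0|^-1 *: e0); split.
  by rewrite normrZ ger0_norm ?invr_ge0 // mulVf ?normr_eq0.
by rewrite linear_opZ // Te0 /= !mulr0.
Qed.

Lemma op_comb_perturb T (de : R) (g : V -> R) (w : R * R) :
  op_comb 2^-1 (perturb T de g w) (perturb T (- de) g w) = T.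
Proof.
apply: funext => x; rewrite /op_comb /perturb /=.
by case: (T x) => t1 t2 /=; congr pair; field.
Qed.

Lemma perturb_linear T (de : R) (g : V -> R) (w : R * R) : is_linear_op T ->
  (forall a x y, g (a *: x + y) = a * g x + g y) -> is_linear_op (perturb T de g w).
Proof. by move=> Tlin glin a x y; rewrite /perturb Tlin glin /=; congr pair; ring. Qed.

End BoundedOperators.

Section InnerProduct.
Variables (R : realType) (V : completeNormedModType R) (ip : V -> V -> R).
Hypothesis ipP : is_inner_product ip.

Lemma norm_ip_decomp (e x : V) : ip e e = 1 ->
  `|x| ^+ 2 = ip x e ^+ 2 + `|x - ip x e *: e| ^+ 2.
Proof.
have [ipl [ips ipn]] := ipP; move=> ipe; set a := ip x e.
have -> : x - a *: e = (- a) *: e + x by rewrite addrC scaleNr.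
rewrite !ipn (ipl (- a) e x) (ips e) (ipl (- a) e x e) ipe (ips x (_ + x)).
rewrite (ipl (- a) e x x) (ips e x) -/a; ring.
Qed.

Lemma lp_tangent_perturb_unit_ball (k : nat) (T : V -> R * R) (v : R * R) (e : V) :
  unit_ball_op k.+1.*2 T -> (forall x, exists c, T x = (c * v.1, c * v.2)) ->
  v != (0, 0) -> `|e| = 1 -> T e = (0, 0) ->
  exists2 de0 : R, 0 < de0 & forall de : R, `|de| <= de0 ->
    unit_ball_op k.+1.*2 (perturb T de (ip^~ e) (lp_tangent k.*2 v)).
Proof.
have [ipl [_ ipn]] := ipP.
move=> /unit_ball_opE-/(_ isT) [Tlin Tle] hv v0 e1 Te.
have ev m : ~~ odd m.*2 by rewrite odd_double.
have [M M0 hM] := sum_exprn_lp_tangent_le k.*2 v.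
set mu := Num.max `|v.1| `|v.2|.
have mu0 : 0 < mu.
  by rewrite /mu lt_max !normr_gt0 -negb_and -xpair_eqE -surjective_pairing.
have muN : mu ^+ k.+1.*2 <= v.1 ^+ k.+1.*2 + v.2 ^+ k.+1.*2.
  rewrite -(normr_exprn_even v.1 (ev _)) -(normr_exprn_even v.2 (ev _)) /mu maxEle.
  by case: ifP => _; rewrite ?lerDr ?lerDl exprn_ge0.
set L := M * (mu^-1 + 1) ^+ k.*2.
have L0 : 0 <= L by rewrite mulr_ge0 // exprn_ge0 // addr_ge0 // invr_ge0 (ltW mu0).
exists (1 + L)^-1 => [|de hde]; first by rewrite invr_gt0; lra.
have de1 : `|de| <= 1.
  have inv1 : (1 + L)^-1 <= 1 by rewrite invf_le1; lra.
  exact: le_trans hde inv1.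
have deL : M * de ^+ 2 * (mu^-1 + 1) ^+ k.*2 <= 1.
  have de2 : de ^+ 2 <= (1 + L)^-1.
    rewrite -real_normK ?num_real // expr2; apply: le_trans hde.
    by rewrite ler_piMr.
  rewrite mulrAC -/L; apply: le_trans (ler_wpM2l L0 de2) _.
  by rewrite ler_pdivrMr; lra.
apply/unit_ball_opE => //; split; first by apply: perturb_linear => // a x y; exact: ipl.
move=> x; set al := ip x e; set y := x - al *: e.
have [c Ty] := hv y.
have Tx : T x = T y.
  by rewrite /y addrC -scaleNr Tlin Te /= !mulr0 !add0r; case: (T x).
have cN : c ^+ k.+1.*2 * (v.1 ^+ k.+1.*2 + v.2 ^+ k.+1.*2) <= `|y| ^+ k.+1.*2.
  by have := Tle y; rewrite Ty /= !normr_exprn_even // !exprMn mulrDr.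
rewrite /perturb /= Tx Ty /= !normr_exprn_even //.
apply: le_trans (hM c (de * al)) _.
apply: (lp_tangent_budget mu0 muN M0 (normr_ge0 y) (normr_ge0 x) _ cN de1 deL).
by rewrite (norm_ip_decomp x (_ : ip e e = 1)) // -ipn e1 expr1n.
Qed.

End InnerProduct.

Theorem mainTheorem13 (R : realType) (V : completeNormedModType R)
  (ip : V -> V -> R) (p : nat) (T : V -> R * R) :
  is_inner_product ip -> dim_ge2 V ->
  (0 < p)%N -> ~~ odd p ->
  BL p T -> rank_one T -> opnorm p T = 1 ->
  ~ extreme_contraction p T.
Proof.
move=> ipP dimV p0 p_even.
have [k ->] : exists k, p = k.+1.*2.
  case: p p0 p_even => [|[|p]] //= _; rewrite negbK => p_even.
  by exists p./2; rewrite doubleS even_halfK.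
move=> [Tlin _] [[x0 Tx0] [v hv]] _ [_ [T_ball T_extreme]].
have [e [e1 Te]] := rank_one_kernel dimV Tlin hv.
have v0 : v != (0, 0).
  by apply: contraNneq Tx0 => v0; have [c ->] := hv x0; rewrite v0 /= !mulr0.
have [de de0 hde] := lp_tangent_perturb_unit_ball ipP T_ball hv v0 e1 Te.
have half : 0 < (2^-1 : R) < 1 by rewrite invr_gt0 ltr0n /= invf_lt1 ?ltr0n // ltr1n.
have de_le : `|de| <= de by rewrite ger0_norm // ltW.
have deN_le : `|- de| <= de by rewrite normrN.
have [Tde _] := T_extreme _ _ _ (hde _ de_le) (hde _ deN_le) half
  (esym (op_comb_perturb T de _ _)).
have ipe : ip e e = 1 by case: ipP => _ [_ <-]; rewrite e1 expr1n.
move: v0 (congr1 (fun S => S e) Tde); rewrite -(lp_tangent_eq0 k.*2).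
case: (lp_tangent _ _) => w1 w2; rewrite /perturb /= Te ipe mulr1 !add0r.
move=> w_neq0 [/eqP + /eqP]; rewrite !mulf_eq0 gt_eqF //= => /eqP w1_0 /eqP w2_0.
by move: w_neq0; rewrite w1_0 w2_0 eqxx.
Qed.
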